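(* Let $\mathcal{G}$ be a simple temporal clique and $G^-=(V,E^-)$ its minimum-edge digraph. For every directed path $(u_0,u_1,\dots,u_k)$ with $k\ge 1$ in $G^-$, the vertex sequence $u_0,u_1,\dots,u_k$ is a journey in $\mathcal{G}$.
   Context: A simple temporal clique is a pair $\mathcal{G}=(G,\lambda)$ where $G=(V,E)$ is the complete graph on a finite vertex set $V$ and $\lambda:E\to\mathbb{N}$ assigns to each edge a single integer label such that any two distinct edges sharing an endpoint have different labels. A journey from $x$ to $y$ is a sequence of vertices $x=u_0,\dots,u_k=y$ ($k\ge1$) with $\lambda(\{u_{i-1},u_i\})<\lambda(\{u_i,u_{i+1}\})$ for all $1\le i<k$. For a vertex $v$, $e^-(v)$ denotes the edge incident to $v$ with the smallest label. The minimum-edge digraph $G^-=(V,E^-)$ has an arc $(u,v)$ whenever $\{u,v\}=e^-(v)$, except that if two vertices $u,v$ satisfy $e^-(u)=e^-(v)=\{u,v\}$, only one of the two arcs $(u,v),(v,u)$ is included (chosen arbitrarily). *)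

From mathcomp Require Import all_boot.
Set Implicit Arguments. Unset Strict Implicit. Unset Printing Implicit Defensive.

(* A temporal clique on the finite vertex set V: the label of the edge {u,v}
   (u != v) is lam u v; lam is required symmetric on distinct vertices.
   Values lam v v are irrelevant. *)
Definition simple_temporal_clique (V : finType) (lam : V -> V -> nat) : Prop :=
  (forall u v : V, u != v -> lam u v = lam v u) /\
  (forall u v w : V, u != v -> u != w -> v != w -> lam u v != lam u w).

(* the edge {u,v} is e^-(v): the edge incident to v with the smallest label *)
Definition is_min_edge (V : finType) (lam : V -> V -> nat) (u v : V) : Prop :=
  u != v /\ forall w : V, w != v -> w != u -> lam u v < lam w v.

(* A : rel V is a minimum-edge digraph G^- of (K_V, lam): it has an arc (u,v)
   exactly when {u,v} = e^-(v), except that when e^-(u) = e^-(v) = {u,v}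
   exactly one of the arcs (u,v), (v,u) is present (arbitrary choice). *)
Definition min_edge_digraph (V : finType) (lam : V -> V -> nat) (A : rel V) : Prop :=
  (forall u v : V, A u v -> is_min_edge lam u v) /\
  (forall u v : V, is_min_edge lam u v -> ~ is_min_edge lam v u -> A u v) /\
  (forall u v : V, is_min_edge lam u v -> is_min_edge lam v u ->
     (A u v \/ A v u) /\ ~ (A u v /\ A v u)).

(* a directed path (u_0, ..., u_k), k >= 1, in the digraph A, given as
   u_0 = x and [:: u_1; ...; u_k] = p: consecutive arcs, distinct vertices *)
Definition directed_path (V : finType) (A : rel V) (x : V) (p : seq V) : Prop :=
  0 < size p /\ path A x p /\ uniq (x :: p).

(* a journey u_0 = x, u_1, ..., u_k ([:: u_1; ...; u_k] = p), k >= 1: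
   consecutive vertices are distinct (so form edges of the clique) and the
   labels of consecutive edges strictly increase *)
Fixpoint increasing_labels (V : finType) (lam : V -> V -> nat) (a b : V) (s : seq V)
  : Prop :=
  match s with
  | [::] => True
  | c :: s' => lam a b < lam b c /\ increasing_labels lam b c s'
  end.

Definition journey (V : finType) (lam : V -> V -> nat) (x : V) (p : seq V) : Prop :=
  match p with
  | [::] => False
  | y :: p' => path (fun a b : V => a != b) x p /\ increasing_labels lam x y p'
  end.

From mathcomp Require Import all_boot.
Set Implicit Arguments. Unset Strict Implicit. Unset Printing Implicit Defensive.

Section MinEdgePaths.

Variables (V : finType) (lam : V -> V -> nat).
Hypothesis lam_sym : forall u v : V, u != v -> lam u v = lam v u.

Lemma min_edge_lt_next (x y z : V) :
  is_min_edge lam x y -> y != z -> z != x -> lam x y < lam y z.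
Proof.
move=> [_ min_xy] neq_yz neq_zx.
by rewrite (lam_sym neq_yz) min_xy // eq_sym.
Qed.

Variable A : rel V.
Hypothesis arc_min_edge : forall u v : V, A u v -> is_min_edge lam u v.

Lemma min_edge_path_increasing (s : seq V) (x y : V) :
  path A x (y :: s) -> uniq (x :: y :: s) -> increasing_labels lam x y s.
Proof.
elim: s x y => [|z s IHs] x y //= /and3P[Axy Ayz Azs] /andP[x_notin uniq_ys].
have neq_zx : z != x.
  by apply: contraNneq x_notin => <-; rewrite !inE eqxx orbT.
have [neq_yz _] := arc_min_edge Ayz.
split; first exact: min_edge_lt_next (arc_min_edge Axy) neq_yz neq_zx.
by apply: IHs; rewrite //= Ayz.
Qed.

Lemma min_edge_path_neq (x : V) (p : seq V) :
  path A x p -> path (fun a b : V => a != b) x p.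
Proof. by apply: sub_path => a b /arc_min_edge[]. Qed.

End MinEdgePaths.

Theorem lemma2 (V : finType) (lam : V -> V -> nat) (A : rel V) :
  simple_temporal_clique lam ->
  min_edge_digraph lam A ->
  forall (x : V) (p : seq V), directed_path A x p -> journey lam x p.
Proof.
move=> [lam_sym _] [arc_min_edge _] x [|y s] [_ [path_A uniq_p]] //.
split; first exact: (min_edge_path_neq arc_min_edge path_A).
exact: (min_edge_path_increasing lam_sym arc_min_edge path_A uniq_p).
Qed.
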